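(* Let $A>0$, $\lambda>0$, $\xi=\sqrt{1-8\lambda}$ (principal branch), and let $(\mathfrak{M}_n)_{n\ge0}$ be defined by $\mathfrak{M}_0=1$ and $\big(\frac{n(n-1)}{2}+\lambda\big)\mathfrak{M}_n+n\mathfrak{M}_{n-1}=\lambda A^n$ for $n\in\mathbb{N}$. Then for every $n\in\mathbb{N}\cup\{0\}$, $$\mathfrak{M}_n=\frac{(-2)^n\,n!}{\big(\tfrac12+\tfrac{\xi}{2}\big)_n\big(\tfrac12-\tfrac{\xi}{2}\big)_n}\sum_{k=0}^{n}\Big(-\tfrac12+\tfrac{\xi}{2}\Big)_k\Big(-\tfrac12-\tfrac{\xi}{2}\Big)_k\frac{1}{k!}\Big(-\frac{A}{2}\Big)^k .$$ In particular $\mathfrak{M}_1=A-1/\lambda$.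
   Context: Pochhammer symbol: $(z)_0=1$, $(z)_n=z(z+1)\cdots(z+n-1)$ for $n\in\mathbb{N}$. The principal branch convention means $\xi\in[0,1)$ if $\lambda\le1/8$ and $\xi$ is purely imaginary if $\lambda>1/8$. *)

(* complex numbers rendered as an arbitrary numClosedFieldType. *)
From HB Require Import structures.
From mathcomp Require Import all_boot all_order all_algebra.
Set Implicit Arguments. Unset Strict Implicit. Unset Printing Implicit Defensive.
Import Order.TTheory GRing.Theory Num.Theory.
Local Open Scope ring_scope.

Definition poch {R : nzRingType} (z : R) (n : nat) : R :=
  \prod_(i < n) (z + i%:R).

From HB Require Import structures.
From mathcomp Require Import all_boot all_order all_algebra.
From mathcomp Require Import ring.
Import Order.TTheory GRing.Theory Num.Theory.
Local Open Scope ring_scope.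

(* a = 1/2 + xi/2 and b = 1/2 - xi/2 are the roots of X^2 - X + 2 lam, so
   (a + n)(b + n) = 2 (n(n+1)/2 + lam) is twice the coefficient of M_{n+1} and
   (a - 1)(b - 1) = 2 lam.  Hence T_n = (a)_n (b)_n / ((-2)^n n!) * M_n satisfies
   T_{n+1} = T_n + (a-1)_{n+1} (b-1)_{n+1} / (n+1)! * (-A/2)^{n+1},
   and the formula is this telescoping sum solved for M_n.  Only xi^2 = 1 - 8 lam
   is used: neither the branch of the square root nor the sign of A matters. *)

Lemma pochS (R : nzRingType) (z : R) (n : nat) :
  poch z n.+1 = poch z n * (z + n%:R).
Proof. by rewrite /poch big_ord_recr. Qed.

Lemma poch_subr1S (R : comNzRingType) (z : R) (n : nat) :
  poch (z - 1) n.+1 = (z - 1) * poch z n.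
Proof.
rewrite /poch big_ord_recl addr0; congr (_ * _).
by apply: eq_bigr => i _; rewrite lift0 -natr1; ring.
Qed.

Section PochhammerRecurrence.

Variables (R : numFieldType) (a b lam A : R) (M : nat -> R).
Hypotheses (hab_add : a + b = 1) (hab_mul : a * b = 2 * lam) (hlam : 0 < lam).
Hypothesis hM0 : M 0%N = 1.
Hypothesis hrec : forall n : nat,
  ((n.+1)%:R * n%:R / 2 + lam) * M n.+1 + (n.+1)%:R * M n = lam * A ^+ n.+1.

Let coef (n : nat) : R := (n.+1)%:R * n%:R / 2 + lam.

Lemma coef_neq0 (n : nat) : coef n != 0.
Proof. by rewrite gt_eqF // ltr_wpDl // divr_ge0 // mulr_ge0. Qed.

Lemma mul_shift_roots (n : nat) : (a + n%:R) * (b + n%:R) = 2 * coef n.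
Proof.
have -> : (a + n%:R) * (b + n%:R) = a * b + (a + b) * n%:R + n%:R * n%:R by ring.
by rewrite hab_mul hab_add /coef -natr1; field.
Qed.

Lemma mul_pred_roots : (a - 1) * (b - 1) = 2 * lam.
Proof.
have -> : (a - 1) * (b - 1) = a * b - (a + b) + 1 by ring.
by rewrite hab_mul hab_add; ring.
Qed.

Lemma poch_mul_neq0 (n : nat) : poch a n * poch b n != 0.
Proof.
elim: n => [|n IH]; first by rewrite /poch !big_ord0 mulr1 oner_neq0.
rewrite !pochS mulrACA mulf_neq0 // mul_shift_roots mulf_neq0 ?coef_neq0 //.
by rewrite pnatr_eq0.
Qed.

Let T (n : nat) : R := poch a n * poch b n / ((-2) ^+ n * (n`!)%:R) * M n.

Let term (k : nat) : R :=
  poch (a - 1) k * poch (b - 1) k / (k`!)%:R * (- A / 2) ^+ k.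

Lemma normalised_succ (n : nat) : T n.+1 = T n + term n.+1.
Proof.
have hM : M n.+1 = (lam * A ^+ n.+1 - (n.+1)%:R * M n) / coef n.
  by rewrite -(hrec n) addrK (mulrC _ (M _)) mulfK ?coef_neq0.
rewrite /T /term !poch_subr1S !pochS mulrACA mul_shift_roots.
rewrite [(a - 1) * _ * _]mulrACA mul_pred_roots hM /coef factS natrM.
have -> : - A / 2 = A / -2 by rewrite invrN mulrN mulNr.
rewrite expr_div_n !(exprS (-2)).
have f0 : (n`!)%:R != 0 :> R by rewrite pnatr_eq0 -lt0n fact_gt0.
have n0 : (n.+1)%:R != 0 :> R by rewrite pnatr_eq0.
have u0 : (-2 : R) ^+ n != 0 by rewrite expf_neq0 // oppr_eq0 pnatr_eq0.
have c0 : (n.+1)%:R * n%:R + lam * 2 != 0 :> R.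
  by rewrite gt_eqF // ltr_wpDl ?mulr_ge0 ?mulr_gt0.
move: (poch a n * poch b n) ((-2 : R) ^+ n) (A ^+ n.+1) (M n) (n`!)%:R (n.+1)%:R n%:R
  f0 n0 u0 c0 => c u w m f k l f0 n0 u0 c0.
by field; rewrite u0 f0 n0 c0.
Qed.

Lemma normalised_sum (n : nat) : T n = \sum_(k < n.+1) term k.
Proof.
elim: n => [|n IH].
  by rewrite /T /term big_ord1 hM0 /poch !big_ord0 !expr0 !mulr1 divr1.
by rewrite normalised_succ IH [in RHS]big_ord_recr.
Qed.

Lemma poch_recurrence_solution (n : nat) :
  M n = (-2) ^+ n * (n`!)%:R / (poch a n * poch b n)
        * \sum_(k < n.+1) poch (a - 1) k * poch (b - 1) k / (k`!)%:R * (- A / 2) ^+ k.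
Proof.
have := normalised_sum n; rewrite /T => <-.
have u0 : (-2 : R) ^+ n * (n`!)%:R != 0.
  by rewrite mulf_neq0 ?expf_neq0 ?oppr_eq0 ?pnatr_eq0 -?lt0n ?fact_gt0.
move: (poch a n * poch b n) (poch_mul_neq0 n) ((-2) ^+ n * _) u0 => c c0 u u0.
by field; rewrite c0 u0.
Qed.

End PochhammerRecurrence.

Theorem mainTheorem2 (C : numClosedFieldType) (A lam : C) (M : nat -> C)
  (hA : 0 < A) (hlam : 0 < lam)
  (hM0 : M 0%N = 1)
  (hrec : forall n : nat,
      ((n.+1)%:R * n%:R / 2 + lam) * M n.+1 + (n.+1)%:R * M n = lam * A ^+ n.+1) :
  let xi := sqrtC (1 - 8 * lam) in
  (forall n : nat,
     M n = (-2) ^+ n * (n`!)%:R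
             / (poch (2^-1 + xi / 2) n * poch (2^-1 - xi / 2) n)
           * \sum_(k < n.+1)
               poch (- 2^-1 + xi / 2) k * poch (- 2^-1 - xi / 2) k
               / (k`!)%:R * (- A / 2) ^+ k)
  /\ M 1%N = A - lam^-1.
Proof.
move=> xi; set a := 2^-1 + xi / 2; set b := 2^-1 - xi / 2.
have hab_add : a + b = 1 by rewrite /a /b; field.
have hab_mul : a * b = 2 * lam.
  have -> : a * b = (1 - xi ^+ 2) / 4 by rewrite /a /b; field.
  by rewrite sqrtCK; field.
have -> : - 2^-1 + xi / 2 = a - 1 by rewrite /a; field.
have -> : - 2^-1 - xi / 2 = b - 1 by rewrite /b; field.
split; first exact: poch_recurrence_solution hab_add hab_mul hlam hM0 hrec.
have lam0 : lam != 0 by rewrite gt_eqF.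
apply: (mulfI lam0); rewrite mulrBr mulfV //.
by rewrite -[A in RHS]expr1 -(hrec 0%N) hM0; ring.
Qed.
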